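(* Let $G$ be a TDLC-group and $P$ a finitely generated projective discrete $\mathbb{Q}[G]$-module. Then the filling pseudo-norm of $P$ is a norm. Moreover, if $P$ is a direct summand of a finitely generated proper permutation module $\mathbb{Q}[\Omega]$, then $P$ is undistorted in $\mathbb{Q}[\Omega]$, i.e. the restriction of $\|\cdot\|_1^\Omega$ to $P$ is equivalent to the filling pseudo-norm of $P$.
   Context: A TDLC-group is a totally disconnected locally compact Hausdorff topological group. A discrete $\mathbb{Q}[G]$-module is a left $\mathbb{Q}[G]$-module in which every element has open stabilizer; projectivity refers to the category of discrete modules, in which a module is projective iff it is a direct summand of a proper permutation module. A $G$-set $\Omega$ is proper if all point stabilizers are compact open; $\mathbb{Q}[\Omega]$ is then a proper permutation module, finitely generated iff $\Omega/G$ is finite, with $\ell_1$-norm $\|\sum a_\omega\omega\|_1^\Omega=\sum|a_\omega|$. For a surjection $\partial:\mathbb{Q}[\Omega]\twoheadrightarrow M$ from a finitely generated proper permutation module, the filling pseudo-norm is $\|m\|_\partial=\inf\{\|x\|_1^\Omega:\partial(x)=m\}$; any two filling pseudo-norms on $M$ are equivalent (equivalence: each bounded by a constant times the other). *)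

From Stdlib Require List.
From HB Require Import structures.
From mathcomp Require Import all_boot all_order all_algebra.
Set Implicit Arguments. Unset Strict Implicit. Unset Printing Implicit Defensive.
Import Order.TTheory GRing.Theory Num.Theory.
Local Open Scope ring_scope.

Definition is_topology (T : Type) (op : (T -> Prop) -> Prop) : Prop :=
  [/\ op (fun _ => True),
      (forall (I : Type) (U : I -> T -> Prop), (forall i, op (U i)) ->
          op (fun x => exists i, U i x)) &
      (forall U V, op U -> op V -> op (fun x => U x /\ V x))].

Definition compact (T : Type) (op : (T -> Prop) -> Prop) (K : T -> Prop) : Prop :=
  forall (I : Type) (U : I -> T -> Prop), (forall i, op (U i)) ->
    (forall x, K x -> exists i, U i x) ->
    exists s : list I, forall x, K x -> exists i, List.In i s /\ U i x.

Definition connected (T : Type) (op : (T -> Prop) -> Prop) (S : T -> Prop) : Prop :=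
  forall U V, op U -> op V -> (forall x, S x -> U x \/ V x) ->
    (forall x, S x -> U x -> V x -> False) ->
    (forall x, S x -> U x) \/ (forall x, S x -> V x).

Record tdlc := TDLC {
  gcar :> Type;
  gmul : gcar -> gcar -> gcar;
  ginv : gcar -> gcar;
  gone : gcar;
  gmulA : forall x y z, gmul x (gmul y z) = gmul (gmul x y) z;
  gmul1 : forall x, gmul gone x = x;
  gmulV : forall x, gmul (ginv x) x = gone;
  gopen : (gcar -> Prop) -> Prop;
  gtop : is_topology gopen;
  gmul_cont : forall U, gopen U -> forall x y, U (gmul x y) ->
     exists V W, [/\ gopen V, gopen W, V x, W y &
                     forall a b, V a -> W b -> U (gmul a b)];
  ginv_cont : forall U, gopen U -> gopen (fun x => U (ginv x));
  ghaus : forall x y, x <> y -> exists U V, [/\ gopen U, gopen V, U x, V y &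
                                             forall z, U z -> V z -> False];
  gloc_compact : forall x, exists U K, [/\ gopen U, U x, compact gopen K &
                                          forall z, U z -> K z];
  gtot_disc : forall S, connected gopen S -> forall x y, S x -> S y -> x = y
}.
Arguments gopen : clear implicits.
Arguments gone : clear implicits.

Record dmod (G : tdlc) := DMod {
  mcar :> lmodType rat;
  mact : G -> mcar -> mcar;
  mact_lin : forall g (a : rat) x y, mact g (a *: x + y) = a *: mact g x + mact g y;
  mact1 : forall x, mact (gone G) x = x;
  mactM : forall g h x, mact (gmul g h) x = mact g (mact h x);
  mact_disc : forall x, gopen G (fun g => mact g x = x)
}.
Arguments mact {G} _ _ _.

Definition is_hom (G : tdlc) (M N : dmod G) (f : M -> N) : Prop :=
  (forall (a : rat) x y, f (a *: x + y) = a *: f x + f y) /\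
  (forall g x, f (mact M g x) = mact N g (f x)).

Definition projective (G : tdlc) (P : dmod G) : Prop :=
  forall (M N : dmod G) (p : M -> N) (f : P -> N),
    is_hom p -> (forall n, exists m, p m = n) -> is_hom f ->
    exists h : P -> M, is_hom h /\ forall x, p (h x) = f x.

Definition fin_gen (G : tdlc) (P : dmod G) : Prop :=
  exists s : seq P, forall x : P, exists (n : nat) (a : 'I_n -> rat)
    (g : 'I_n -> G) (v : 'I_n -> P),
    (forall i, v i \in s) /\ x = \sum_(i < n) a i *: mact P (g i) (v i).

Record gset (G : tdlc) := GSet {
  scar :> eqType;
  sact : G -> scar -> scar;
  sact1 : forall w, sact (gone G) w = w;
  sactM : forall g h w, sact (gmul g h) w = sact g (sact h w)
}.
Arguments sact {G} _ _ _.

Definition stab (G : tdlc) (O : gset G) (w : O) : G -> Prop :=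
  fun g => sact O g w = w.

Definition proper_gset (G : tdlc) (O : gset G) : Prop :=
  forall w : O, gopen G (stab w) /\ compact (gopen G) (stab w).

Definition fin_orbits (G : tdlc) (O : gset G) : Prop :=
  exists s : seq O, forall w : O, exists2 w0, w0 \in s & exists g, w = sact O g w0.

(* An element of Q[O]: a finitely supported function O -> Q, together with
   a duplicate-free list containing its support. *)
Record qperm (G : tdlc) (O : gset G) := QPerm {
  coef : O -> rat;
  supp : seq O;
  supp_uniq : uniq supp;
  supp_cov : forall w, coef w != 0 -> w \in supp
}.
Arguments coef {G O} _ _.
Arguments supp {G O} _.

Definition l1 (G : tdlc) (O : gset G) (x : qperm O) : rat :=
  \sum_(w <- supp x) `|coef x w|.

(* G-equivariant maps O -> M; these are exactly the restrictions to the basis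
   of the Q[G]-homomorphisms Q[O] -> M *)
Definition equivariant (G : tdlc) (O : gset G) (M : dmod G) (d : O -> M) : Prop :=
  forall g w, d (sact O g w) = mact M g (d w).

Definition pmap (G : tdlc) (O : gset G) (M : dmod G) (d : O -> M) (x : qperm O) : M :=
  \sum_(w <- supp x) coef x w *: d w.

Definition surj_pmap (G : tdlc) (O : gset G) (M : dmod G) (d : O -> M) : Prop :=
  equivariant d /\ forall m : M, exists x : qperm O, pmap d x = m.

(* ---------- filling pseudo-norm ||m||_d = inf { ||x||_1 : d(x) = m } ---------- *)
(* c <= ||m||_d *)
Definition fill_ge (G : tdlc) (O : gset G) (M : dmod G) (d : O -> M) (m : M) (c : rat) : Prop :=
  forall x : qperm O, pmap d x = m -> c <= l1 x.
(* ||m||_d <= c *)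
Definition fill_le (G : tdlc) (O : gset G) (M : dmod G) (d : O -> M) (m : M) (c : rat) : Prop :=
  forall e : rat, 0 < e -> exists x : qperm O, pmap d x = m /\ l1 x <= c + e.

Definition filling_is_norm (G : tdlc) (O : gset G) (M : dmod G) (d : O -> M) : Prop :=
  forall m : M, m != 0 -> exists2 c : rat, 0 < c & fill_ge d m c.

Definition hom_to_qperm (G : tdlc) (P : dmod G) (O : gset G) (i : P -> qperm O) : Prop :=
  (forall (a : rat) p q w, coef (i (a *: p + q)) w = a * coef (i p) w + coef (i q) w) /\
  (forall g p w, coef (i (mact P g p)) w = coef (i p) (sact O (ginv g) w)).

Definition direct_summand (G : tdlc) (P : dmod G) (O : gset G)
    (i : P -> qperm O) (r : O -> P) : Prop :=
  [/\ hom_to_qperm i, equivariant r & forall p, pmap r (i p) = p].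

Definition undistorted (G : tdlc) (P : dmod G) (O O' : gset G)
    (i : P -> qperm O) (d : O' -> P) : Prop :=
  exists2 C : rat, 0 < C &
    forall p : P, fill_le d p (C * l1 (i p)) /\ fill_ge d p (l1 (i p) / C).

(* Proposition 4.4.  Everything rests on one estimate (hom_pmap_l1_bound):
   if d : O' -> P is equivariant and O' has finitely many G-orbits, then for
   every Q[G]-linear i : P -> Q[O] there is C with ||i(d x)||_1 <= C ||x||_1,
   because w |-> ||i(d w)||_1 is constant on orbits (G acts isometrically).
   - Norm: projectivity lifts id_P along d : Q[O'] ->> P to a section j; if
     d x = m <> 0 then 0 < ||j m||_1 <= C ||x||_1.
   - Undistortedness: the estimate for the section i gives the lower bound;
     for the upper bound, lifts of the points r w (r the retraction) of
     uniformly bounded norm are obtained by translating lifts of orbit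
     representatives, and combined with the coefficients of i p.
   The file develops finite sums over supports, translations and linear
   combinations in Q[O], the estimate and both parts, and finally Q[O] as a
   discrete module of finitely supported functions (needed to apply
   projectivity; discreteness uses that pointwise stabilisers of finite
   subsets of a proper G-set are open). *)
From Pilot Require Import Defs.
From HB Require Import structures.
From mathcomp Require Import all_boot all_order all_algebra.
From mathcomp Require Import boolp lra.
Set Implicit Arguments. Unset Strict Implicit. Unset Printing Implicit Defensive.
Import Order.TTheory GRing.Theory Num.Theory.
Local Open Scope ring_scope.

Lemma sum_support_indep (T : eqType) (V : nmodType) (f : T -> rat) (F : T -> V)
    (s1 s2 : seq T) :
  uniq s1 -> uniq s2 -> (forall w, f w != 0 -> w \in s1) ->
  (forall w, f w != 0 -> w \in s2) ->
  (forall w, f w = 0 -> F w = 0) -> \sum_(w <- s1) F w = \sum_(w <- s2) F w.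
Proof.
move=> u1 u2 c1 c2 F0.
have on_support s : \sum_(w <- s) F w = \sum_(w <- s | f w != 0) F w.
  rewrite [RHS]big_mkcond; apply: eq_bigr => w _.
  by case: (boolP (f w != 0)) => // /negPn /eqP /F0.
rewrite (on_support s1) (on_support s2) -(big_filter s1) -(big_filter s2).
apply: perm_big; apply: uniq_perm; rewrite ?filter_uniq // => w.
by rewrite !mem_filter; case: (boolP (f w != 0)) => //= /[dup] /c1 -> /c2 ->.
Qed.

Lemma sum_ge_term (T : eqType) (F : T -> rat) (s : seq T) (v : T) :
  (forall w, 0 <= F w) -> v \in s -> F v <= \sum_(w <- s) F w.
Proof.
move=> F0; elim: s => //= x s IH; rewrite in_cons big_cons => /orP [/eqP ->| vs].
  by rewrite lerDl sumr_ge0.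
by apply: le_trans (IH vs) _; rewrite lerDr F0.
Qed.

Section GroupFacts.
Variable G : tdlc.
Local Notation "x * y" := (gmul x y).
Local Notation "1" := (gone G).

(* The axioms of tdlc only give a left identity and left inverses; the
   right-handed versions follow as usual. *)
Lemma gmulVr (x : G) : x * ginv x = 1.
Proof.
have e : ginv (ginv x) * ginv x = 1 by apply: gmulV.
by rewrite -[x * ginv x]gmul1 -{1}e -gmulA (gmulA (ginv x)) gmulV gmul1.
Qed.

Lemma gmulr1 (x : G) : x * 1 = x.
Proof. by rewrite -(gmulV x) gmulA gmulVr gmul1. Qed.

Lemma ginv_uniq (a x : G) : a * x = 1 -> a = ginv x.
Proof. by move=> h; rewrite -[a]gmulr1 -(gmulVr x) gmulA h gmul1. Qed.

Lemma ginvM (x y : G) : ginv (x * y) = ginv y * ginv x.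
Proof.
by symmetry; apply: ginv_uniq; rewrite -gmulA (gmulA (ginv x)) gmulV gmul1 gmulV.
Qed.

Lemma ginv1 : ginv 1 = 1.
Proof. by symmetry; apply: ginv_uniq; rewrite gmul1. Qed.

Variable O : gset G.

Lemma sactK (g : G) (w : O) : sact O (ginv g) (sact O g w) = w.
Proof. by rewrite -sactM gmulV sact1. Qed.

Lemma sactVK (g : G) (w : O) : sact O g (sact O (ginv g) w) = w.
Proof. by rewrite -sactM gmulVr sact1. Qed.

Lemma sact_inj (g : G) : injective (sact O g).
Proof. by move=> a b h; rewrite -(sactK g a) h sactK. Qed.
End GroupFacts.

Section ModuleFacts.
Variables (G : tdlc) (M : dmod G) (g : G).

Lemma mact0 : mact M g 0 = 0.
Proof.
have h := @mact_lin G M g 1 0 0; rewrite !scale1r addr0 in h.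
by apply: (addrI (mact M g 0)); rewrite addr0 -h.
Qed.

Lemma mactD x y : mact M g (x + y) = mact M g x + mact M g y.
Proof. by have := @mact_lin G M g 1 x y; rewrite !scale1r. Qed.

Lemma mactZ a x : mact M g (a *: x) = a *: mact M g x.
Proof. by have := @mact_lin G M g a x 0; rewrite !addr0 mact0 addr0. Qed.

Lemma mact_sum (T : Type) (s : seq T) (a : T -> rat) (u : T -> M) :
  mact M g (\sum_(v <- s) a v *: u v) = \sum_(v <- s) a v *: mact M g (u v).
Proof.
elim: s => [|x s IH]; first by rewrite !big_nil mact0.
by rewrite !big_cons mactD mactZ IH.
Qed.
End ModuleFacts.

Section PermutationModule.
Variables (G : tdlc) (O : gset G).

Definition covers (f : O -> rat) (s : seq O) : Prop := forall w, f w != 0 -> w \in s.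

Lemma covers_subset (x : qperm O) (s : seq O) : {subset supp x <= s} -> covers (coef x) s.
Proof. by move=> sub w /supp_cov /sub. Qed.

Lemma l1_cover (x : qperm O) (s : seq O) : uniq s -> covers (coef x) s ->
  l1 x = \sum_(w <- s) `|coef x w|.
Proof.
move=> us cs; apply: (sum_support_indep (f := coef x)) => //.
- exact: supp_uniq.
- exact: supp_cov.
- by move=> w ->; rewrite normr0.
Qed.

Lemma pmap_cover (M : dmod G) (d : O -> M) (x : qperm O) (s : seq O) :
  uniq s -> covers (coef x) s -> Defs.pmap d x = \sum_(w <- s) coef x w *: d w.
Proof.
move=> us cs; apply: (sum_support_indep (f := coef x)) => //.
- exact: supp_uniq.
- exact: supp_cov.
- by move=> w ->; rewrite scale0r.
Qed.

Lemma l1_ge0 (x : qperm O) : 0 <= l1 x.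
Proof. by apply: sumr_ge0 => w _; apply: normr_ge0. Qed.

Lemma l1_gt0_of_pmap (M : dmod G) (d : O -> M) (x : qperm O) :
  Defs.pmap d x != 0 -> 0 < l1 x.
Proof.
apply: contraNT; rewrite -leNgt => l1x0.
have x0 w : w \in supp x -> coef x w = 0.
  move=> ws; apply/eqP; rewrite -normr_eq0 eq_le normr_ge0 andbT.
  by apply: le_trans l1x0; apply: (sum_ge_term (F := fun w => `|coef x w|)).
by apply/eqP; rewrite /Defs.pmap big1_seq // => w /andP [_ /x0 ->]; rewrite scale0r.
Qed.

Lemma qtranslate_uniq (g : G) (x : qperm O) : uniq (map (sact O g) (supp x)).
Proof. by rewrite map_inj_uniq; [exact: supp_uniq | exact: sact_inj]. Qed.

Lemma qtranslate_cov (g : G) (x : qperm O) :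
  covers (fun w => coef x (sact O (ginv g) w)) (map (sact O g) (supp x)).
Proof.
move=> w /supp_cov h; apply/mapP; exists (sact O (ginv g) w) => //.
by rewrite sactVK.
Qed.

Definition qtranslate (g : G) (x : qperm O) : qperm O :=
  @QPerm G O (fun w => coef x (sact O (ginv g) w)) (map (sact O g) (supp x))
    (qtranslate_uniq g x) (@qtranslate_cov g x).

(* G acts on Q[O] by l1-isometries, compatibly with induced maps of
   equivariant d.  Stated for any y with the coefficients of g.x. *)
Lemma l1_translate (g : G) (x y : qperm O) :
  (forall w, coef y w = coef x (sact O (ginv g) w)) -> l1 y = l1 x.
Proof.
move=> yE; rewrite (@l1_cover y _ (qtranslate_uniq g x)); last first.
  by move=> w; rewrite yE; apply: qtranslate_cov.
by rewrite big_map; apply: eq_bigr => v _; rewrite yE sactK.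
Qed.

Lemma pmap_translate (M : dmod G) (d : O -> M) (g : G) (x y : qperm O) :
  equivariant d -> (forall w, coef y w = coef x (sact O (ginv g) w)) ->
  Defs.pmap d y = mact M g (Defs.pmap d x).
Proof.
move=> eqd yE; rewrite (@pmap_cover _ d y _ (qtranslate_uniq g x)); last first.
  by move=> w; rewrite yE; apply: qtranslate_cov.
by rewrite big_map mact_sum; apply: eq_bigr => v _; rewrite yE sactK eqd.
Qed.

Lemma l1_combine (a : rat) (x1 x2 z : qperm O) :
  (forall w, coef z w = a * coef x1 w + coef x2 w) -> l1 z <= `|a| * l1 x1 + l1 x2.
Proof.
move=> zE; set U := undup (supp z ++ supp x1 ++ supp x2).
have uU : uniq U by apply: undup_uniq.
have inU (y : qperm O) : {subset supp y <= supp z ++ supp x1 ++ supp x2} ->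
    covers (coef y) U.
  by move=> sub; apply: covers_subset => w /sub; rewrite mem_undup.
rewrite (l1_cover uU (inU z _)) ?(l1_cover uU (inU x1 _)) ?(l1_cover uU (inU x2 _));
  try by move=> w ws; rewrite !mem_cat ws ?orbT.
rewrite mulr_sumr -big_split /=; apply: ler_sum => w _.
by rewrite zE -normrM; apply: ler_normD.
Qed.
End PermutationModule.

Section Combination.
Variables (G : tdlc) (O : gset G) (T : eqType).
Variables (s : seq T) (a : T -> rat) (y : T -> qperm O).

Definition qcomb_supp : seq O := undup (flatten (map (fun v => supp (y v)) s)).

Lemma qcomb_supp_cov (v : T) : v \in s -> covers (coef (y v)) qcomb_supp.
Proof.
by move=> vs; apply: covers_subset => w ws; rewrite mem_undup; apply/flatten_mapP; exists v.
Qed.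

Lemma qcomb_cov : covers (fun w => \sum_(v <- s) a v * coef (y v) w) qcomb_supp.
Proof.
move=> w; apply: contraNT => wU; rewrite big1_seq // => v /andP [_ vs].
apply/eqP; rewrite mulf_eq0; apply/orP; right.
by apply: contraNT wU; apply: qcomb_supp_cov.
Qed.

Definition qcomb : qperm O :=
  @QPerm G O (fun w => \sum_(v <- s) a v * coef (y v) w) qcomb_supp
    (undup_uniq _) qcomb_cov.

Lemma pmap_qcomb (M : dmod G) (d : O -> M) :
  Defs.pmap d qcomb = \sum_(v <- s) a v *: Defs.pmap d (y v).
Proof.
rewrite [LHS]/Defs.pmap /=.
under eq_bigr => w _ do rewrite scaler_suml.
rewrite exchange_big /=; apply: eq_big_seq => v vs.
rewrite (pmap_cover d (undup_uniq _) (qcomb_supp_cov vs)) scaler_sumr.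
by apply: eq_bigr => w _; rewrite scalerA.
Qed.

Lemma l1_qcomb : l1 qcomb <= \sum_(v <- s) `|a v| * l1 (y v).
Proof.
rewrite [l1 qcomb]/l1 /=.
apply: le_trans (_ : \sum_(w <- qcomb_supp) \sum_(v <- s) `|a v| * `|coef (y v) w| <= _).
  apply: ler_sum => w _; apply: le_trans (ler_norm_sum _ _ _) _.
  by apply: ler_sum => v _; rewrite normrM.
rewrite exchange_big /=.
by under [X in _ <= X]eq_big_seq => v vs
  do rewrite (l1_cover (undup_uniq _) (qcomb_supp_cov vs)) mulr_sumr.
Qed.
End Combination.

Section HomToPermutationModule.
Variables (G : tdlc) (P : dmod G) (O : gset G) (i : P -> qperm O).
Hypothesis i_hom : hom_to_qperm i.

Lemma l1_hom0 : l1 (i 0) = 0.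
Proof.
rewrite /l1 big1 // => w _; have := i_hom.1 1 0 0 w.
by rewrite scale1r addr0 => e; rewrite (_ : coef (i 0) w = 0) ?normr0 //; lra.
Qed.

Lemma l1_hom_sum (T : Type) (s : seq T) (a : T -> rat) (u : T -> P) :
  l1 (i (\sum_(v <- s) a v *: u v)) <= \sum_(v <- s) `|a v| * l1 (i (u v)).
Proof.
elim: s => [|x s IH]; first by rewrite !big_nil l1_hom0.
rewrite !big_cons; apply: le_trans (l1_combine (fun w => i_hom.1 (a x) (u x) _ w)) _.
by rewrite lerD2l.
Qed.

(* i is G-equivariant, and G acts isometrically on Q[O]. *)
Lemma l1_hom_act (g : G) (p : P) : l1 (i (mact P g p)) = l1 (i p).
Proof. by apply: (l1_translate (g := g)) => w; exact: i_hom.2. Qed.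
End HomToPermutationModule.

(* The key estimate: if O' has finitely many G-orbits and d : O' -> P is
   equivariant, then x |-> i(d x) is bounded for the l1-norms; the bound C
   is 1 + the sum of ||i(d w0)||_1 over orbit representatives w0. *)
Lemma hom_pmap_l1_bound (G : tdlc) (P : dmod G) (O O' : gset G)
    (i : P -> qperm O) (d : O' -> P) :
  hom_to_qperm i -> equivariant d -> fin_orbits O' ->
  exists2 C, 0 < C & forall x : qperm O', l1 (i (Defs.pmap d x)) <= C * l1 x.
Proof.
move=> i_hom eqd [s0 orbits].
set C := 1 + \sum_(w0 <- s0) l1 (i (d w0)).
have sum_ge0 : 0 <= \sum_(w0 <- s0) l1 (i (d w0)) by apply: sumr_ge0 => w _; apply: l1_ge0.
have basis_bound w : l1 (i (d w)) <= C.
  have [w0 w0s [g ->]] := orbits w; rewrite eqd (l1_hom_act i_hom).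
  have := sum_ge_term (F := fun w => l1 (i (d w))) (fun w => l1_ge0 _) w0s.
  by rewrite /C; lra.
exists C; first by rewrite /C; lra.
move=> x; apply: le_trans (l1_hom_sum i_hom _ _ _) _.
rewrite /l1 mulr_sumr; apply: ler_sum => w _.
by rewrite mulrC; apply: ler_wpM2r; [apply: normr_ge0 | apply: basis_bound].
Qed.

Section Lifts.
Variables (G : tdlc) (P : dmod G) (O O' : gset G) (d : O' -> P).
Hypothesis d_surj : surj_pmap d.

(* If O has finitely many orbits and r : O -> P is equivariant, the points
   r w admit lifts along d of uniformly bounded l1-norm: lift the orbit
   representatives and translate. *)
Lemma bounded_lifts (r : O -> P) : fin_orbits O -> equivariant r ->
  exists2 C, 0 < C & forall w, exists y : qperm O', Defs.pmap d y = r w /\ l1 y <= C.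
Proof.
move=> [s0 orbits] eqr; have [eqd surj] := d_surj.
have [lift liftE] := choice (fun w : O => surj (r w)).
set C := 1 + \sum_(w0 <- s0) l1 (lift w0).
have sum_ge0 : 0 <= \sum_(w0 <- s0) l1 (lift w0) by apply: sumr_ge0 => w _; apply: l1_ge0.
exists C => [|w]; first by rewrite /C; lra.
have [w0 w0s [g ->]] := orbits w; exists (qtranslate g (lift w0)); split.
  by rewrite (pmap_translate (x := lift w0) (g := g) eqd) // liftE eqr.
rewrite (l1_translate (x := lift w0) (g := g)) //.
have := sum_ge_term (F := fun w => l1 (lift w)) (fun w => l1_ge0 _) w0s.
by rewrite /C; lra.
Qed.

(* Consequently every r-image pmap r x lifts along d with l1-norm at most
   C ||x||_1, by combining the lifts with the coefficients of x. *)
Lemma lift_pmap_bound (r : O -> P) : fin_orbits O -> equivariant r ->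
  exists2 C, 0 < C & forall x : qperm O,
    exists z : qperm O', Defs.pmap d z = Defs.pmap r x /\ l1 z <= C * l1 x.
Proof.
move=> fo eqr; have [C C_gt0 lifts] := bounded_lifts fo eqr.
have [lift liftE] := choice lifts.
exists C => // x; exists (qcomb (supp x) (coef x) lift); split.
  by rewrite pmap_qcomb; apply: eq_bigr => w _; rewrite (liftE w).1.
apply: le_trans (l1_qcomb _ _ _) _; rewrite /l1 mulr_sumr; apply: ler_sum => w _.
by rewrite mulrC; apply: ler_wpM2r; [apply: normr_ge0 | apply: (liftE w).2].
Qed.
End Lifts.

(* Second part of the proposition: a direct summand P of Q[O], O with
   finitely many orbits, is undistorted for any filling norm of P.  The
   lower bound is the key estimate for the section i, the upper bound comes
   from lifting p = pmap r (i p) along d. *)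
Lemma summand_undistorted (G : tdlc) (P : dmod G) (O : gset G) (i : P -> qperm O)
    (r : O -> P) (O' : gset G) (d : O' -> P) :
  fin_orbits O -> direct_summand i r -> fin_orbits O' -> surj_pmap d ->
  undistorted i d.
Proof.
move=> fo [i_hom eqr rK] fo' d_surj.
have [C1 C1_gt0 lower] := hom_pmap_l1_bound i_hom d_surj.1 fo'.
have [C2 C2_gt0 upper] := lift_pmap_bound d_surj fo eqr.
exists (C1 + C2) => [|p]; first lra.
have l1p_ge0 := l1_ge0 (i p); split.
  move=> e e_gt0; have [z [zE z_le]] := upper (i p); exists z; rewrite zE rK.
  by split => //; nra.
move=> x xE; rewrite ler_pdivrMr; last lra.
have := lower x; rewrite xE => l1p_le.
by have := l1_ge0 x; nra.
Qed.

Section FinSuppModule.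
Variables (G : tdlc) (O : gset G).

(* Q[O] as a Q-vector space: finitely supported functions O -> Q. *)
Definition fsfun := {f : O -> rat | exists s : seq O, covers f s}.
HB.instance Definition _ := gen_eqMixin fsfun.
HB.instance Definition _ := gen_choiceMixin fsfun.

Lemma fs_eq (f g : fsfun) : (forall w, sval f w = sval g w) -> f = g.
Proof. by case: f g => [f pf] [g pg] /= fg; apply: eq_exist; apply: funext. Qed.

Lemma fs0_cov : exists s : seq O, covers (fun _ => 0 : rat) s.
Proof. by exists [::] => w; rewrite eqxx. Qed.
Definition fs0 : fsfun := exist _ _ fs0_cov.

Lemma fsadd_cov (f g : fsfun) : exists s : seq O, covers (fun w => sval f w + sval g w) s.
Proof.
case: f g => [f [s1 c1]] [g [s2 c2]] /=; exists (s1 ++ s2) => w fgw.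
rewrite mem_cat; case: (boolP (f w != 0)) => [/c1 -> //| /negPn /eqP fw0].
by rewrite fw0 add0r in fgw; rewrite (c2 _ fgw) orbT.
Qed.
Definition fsadd (f g : fsfun) : fsfun := exist _ _ (fsadd_cov f g).

Lemma fsscale_cov (a : rat) (f : fsfun) : exists s : seq O, covers (fun w => a * sval f w) s.
Proof.
case: f => [f [s cs]] /=; exists s => w; rewrite mulf_eq0 negb_or => /andP [_].
exact: cs.
Qed.
Definition fsscale (a : rat) (f : fsfun) : fsfun := exist _ _ (fsscale_cov a f).

Lemma fsaddA : associative fsadd.
Proof. by move=> f g h; apply: fs_eq => w /=; rewrite addrA. Qed.
Lemma fsaddC : commutative fsadd.
Proof. by move=> f g; apply: fs_eq => w /=; rewrite addrC. Qed.
Lemma fsadd0 : left_id fs0 fsadd.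
Proof. by move=> f; apply: fs_eq => w /=; rewrite add0r. Qed.
Lemma fsaddN : left_inverse fs0 (fsscale (-1)) fsadd.
Proof. by move=> f; apply: fs_eq => w /=; rewrite mulN1r addNr. Qed.

HB.instance Definition _ := GRing.isZmodule.Build fsfun fsaddA fsaddC fsadd0 fsaddN.

Lemma fsscaleA a b f : fsscale a (fsscale b f) = fsscale (a * b) f.
Proof. by apply: fs_eq => w /=; rewrite mulrA. Qed.
Lemma fsscale1 : left_id 1 fsscale.
Proof. by move=> f; apply: fs_eq => w /=; rewrite mul1r. Qed.
Lemma fsscaleDr : right_distributive fsscale +%R.
Proof. by move=> a f g; apply: fs_eq => w /=; rewrite mulrDr. Qed.
Lemma fsscaleDl f : {morph fsscale^~ f : a b / a + b}.
Proof. by move=> a b; apply: fs_eq => w /=; rewrite mulrDl. Qed.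

HB.instance Definition _ := GRing.Zmodule_isLmodule.Build rat fsfun
  fsscaleA fsscale1 fsscaleDr fsscaleDl.

Lemma fsact_cov (g : G) (f : fsfun) :
  exists s : seq O, covers (fun w => sval f (sact O (ginv g) w)) s.
Proof.
case: f => [f [s cs]] /=; exists (map (sact O g) s) => w /cs h.
by apply/mapP; exists (sact O (ginv g) w) => //; rewrite sactVK.
Qed.
Definition fsact (g : G) (f : fsfun) : fsfun := exist _ _ (fsact_cov g f).

Lemma fsact_lin g (a : rat) (f1 f2 : fsfun) :
  fsact g (a *: f1 + f2) = a *: fsact g f1 + fsact g f2.
Proof. by apply: fs_eq. Qed.
Lemma fsact1 f : fsact (gone G) f = f.
Proof. by apply: fs_eq => w /=; rewrite ginv1 sact1. Qed.
Lemma fsactM g h f : fsact (gmul g h) f = fsact g (fsact h f).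
Proof. by apply: fs_eq => w /=; rewrite ginvM sactM. Qed.

Lemma fsact_fix_support (g : G) (f : fsfun) (s : seq O) :
  covers (sval f) s -> (forall w, w \in s -> sact O g w = w) -> fsact g f = f.
Proof.
move=> cs fix_s; apply: fs_eq => w /=.
case: (eqVneq (sact O (ginv g) w) w) => [-> // | moved].
have -> : sval f w = 0.
  apply/eqP; apply: contraNT moved => /cs ws.
  by rewrite -{1}(fix_s w ws) sactK.
apply/eqP; apply: contraNT moved => /cs vs.
by rewrite -{2}(sactVK g w) (fix_s _ vs).
Qed.
End FinSuppModule.

Lemma open_of_nbhds (T : Type) (op : (T -> Prop) -> Prop) (S : T -> Prop) :
  is_topology op ->
  (forall x, S x -> exists2 W, op W & W x /\ forall b, W b -> S b) -> op S.
Proof.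
case=> _ op_union _ nbhd.
pose I := {W : T -> Prop | op W /\ forall b, W b -> S b}.
have -> : S = (fun x => exists i : I, sval i x).
  apply: funext => x; apply: propext; split; last by case=> [[W [_ WS]]] /= /WS.
  by case/nbhd => W oW [Wx WS]; exists (exist _ W (conj oW WS)).
by apply: op_union => i; exact: (svalP i).1.
Qed.

(* If S is stable under right multiplication by an open neighbourhood U of 1
   (S x and U(x^-1 b) imply S b), then S is open: by continuity of the
   multiplication at (x^-1, x), some open W containing x satisfies
   x^-1 W <= U, hence W <= S. *)
Lemma open_of_translates (G : tdlc) (U S : G -> Prop) :
  gopen G U -> U (gone G) -> (forall x b, S x -> U (gmul (ginv x) b) -> S b) ->
  gopen G S.
Proof.
move=> oU U1 S_stable; apply: open_of_nbhds (gtop G) _ => x Sx.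
have U1' : U (gmul (ginv x) x) by rewrite gmulV.
have [V [W [_ oW Vx Wx VW]]] := gmul_cont oU U1'.
by exists W => //; split => // b Wb; apply: S_stable Sx (VW _ _ Vx Wb).
Qed.

Section Discreteness.
Variables (G : tdlc) (O : gset G).
Hypothesis O_proper : proper_gset O.

Fixpoint pointwise_stab (s : seq O) : G -> Prop :=
  if s is w :: s' then fun g => sact O g w = w /\ pointwise_stab s' g
  else fun _ => True.

Lemma pointwise_stab_open (s : seq O) : gopen G (pointwise_stab s).
Proof.
have [op_full _ op_cap] := gtop G.
by elim: s => [|w s IH] //=; apply: op_cap IH; case: (O_proper w).
Qed.

Lemma pointwise_stab1 (s : seq O) : pointwise_stab s (gone G).
Proof. by elim: s => //= w s IH; rewrite sact1. Qed.

Lemma pointwise_stabP (s : seq O) (g : G) :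
  pointwise_stab s g -> forall w, w \in s -> sact O g w = w.
Proof.
elim: s => //= v s IH [gv gs] w; rewrite in_cons => /orP [/eqP -> //|].
exact: IH.
Qed.

Lemma fsact_disc (f : fsfun O) : gopen G (fun g => fsact g f = f).
Proof.
have [s cs] := svalP f.
apply: (open_of_translates (pointwise_stab_open s) (pointwise_stab1 s)).
move=> x b fx /pointwise_stabP /(fsact_fix_support cs) fix_f.
by rewrite -[b]gmul1 -(gmulVr x) -gmulA fsactM fix_f fx.
Qed.

Definition fsmod : dmod G := @DMod G (fsfun O) (@fsact G O) (@fsact_lin G O)
  (@fsact1 G O) (@fsactM G O) fsact_disc.
End Discreteness.

Section ProjectiveSection.
Variables (G : tdlc) (P : dmod G) (O : gset G) (d : O -> P).
Hypothesis O_proper : proper_gset O.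

Definition fs_supp (f : fsfun O) : seq O := undup (sval (cid (svalP f))).

Lemma fs_supp_cov (f : fsfun O) : covers (sval f) (fs_supp f).
Proof. by move=> w /(svalP (cid (svalP f))); rewrite mem_undup. Qed.

Definition qperm_of_fs (f : fsfun O) : qperm O :=
  @QPerm G O (sval f) (fs_supp f) (undup_uniq _) (@fs_supp_cov f).

Definition fs_pmap (f : fsmod O_proper) : P := Defs.pmap d (qperm_of_fs f).

Lemma fs_pmap_hom : equivariant d -> is_hom fs_pmap.
Proof.
move=> eqd; split => [a f1 f2|g f]; last first.
  by rewrite /fs_pmap; apply: (pmap_translate eqd).
set U := undup (fs_supp f1 ++ fs_supp f2 ++ fs_supp (a *: f1 + f2)).
have inU (f : fsfun O) : {subset fs_supp f <= fs_supp f1 ++ fs_supp f2 ++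
    fs_supp (a *: f1 + f2)} -> covers (coef (qperm_of_fs f)) U.
  by move=> sub; apply: covers_subset => w /sub; rewrite mem_undup.
rewrite /fs_pmap !(pmap_cover d (undup_uniq _) (inU _ _));
  try by move=> w ws; rewrite !mem_cat ws ?orbT.
rewrite scaler_sumr -big_split; apply: eq_bigr => w _ /=.
by rewrite scalerDl scalerA.
Qed.

Lemma fs_pmap_surj : (forall m : P, exists x : qperm O, Defs.pmap d x = m) ->
  forall m : P, exists f : fsmod O_proper, fs_pmap f = m.
Proof.
move=> surj m; have [x <-] := surj m.
exists (exist _ (coef x) (ex_intro _ (supp x) (@supp_cov _ _ x))).
by rewrite /fs_pmap (@pmap_cover G O P d _ (supp x) (supp_uniq x)) //; exact: (@supp_cov _ _ x).
Qed.

(* Projectivity of P lifts id_P along Q[O] ->> P to a Q[G]-linear section. *)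
Lemma projective_section : projective P -> surj_pmap d ->
  exists j : P -> qperm O, hom_to_qperm j /\ forall m, Defs.pmap d (j m) = m.
Proof.
move=> P_proj [eqd surj].
have id_hom : is_hom (@id P) by [].
have [h [[h_lin h_act] hK]] :=
  P_proj _ _ _ _ (fs_pmap_hom eqd) (fs_pmap_surj surj) id_hom.
exists (fun m => qperm_of_fs (h m)); split => //.
by split=> [a p q w | g p w] /=; rewrite (h_lin, h_act).
Qed.
End ProjectiveSection.

(* First part of the proposition: a section j of d gives
   ||j m||_1 <= C ||x||_1 whenever d x = m, and ||j m||_1 > 0 for m <> 0. *)
Lemma filling_norm_of_section (G : tdlc) (P : dmod G) (O : gset G) (d : O -> P)
    (j : P -> qperm O) :
  fin_orbits O -> equivariant d -> hom_to_qperm j ->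
  (forall m, Defs.pmap d (j m) = m) -> filling_is_norm d.
Proof.
move=> fo eqd j_hom jK; have [C C_gt0 bound] := hom_pmap_l1_bound j_hom eqd fo.
move=> m m_neq0; exists (l1 (j m) / C).
  by apply: divr_gt0 => //; apply: (l1_gt0_of_pmap (d := d)); rewrite jK.
by move=> x xE; rewrite ler_pdivrMr // mulrC; have := bound x; rewrite xE.
Qed.

Unset Implicit Arguments.

Theorem proposition4p4 (G : tdlc) (P : dmod G)
    (P_fg : fin_gen P) (P_proj : projective P) :
  (* every filling pseudo-norm of P is a norm *)
  (forall (O : gset G) (d : O -> P),
      proper_gset O -> fin_orbits O -> surj_pmap d -> filling_is_norm d) /\
  (* if P is a direct summand of a f.g. proper permutation module Q[O],
     then P is undistorted in Q[O] (w.r.t. any filling pseudo-norm of P) *)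
  (forall (O : gset G) (i : P -> qperm O) (r : O -> P),
      proper_gset O -> fin_orbits O -> direct_summand i r ->
      forall (O' : gset G) (d : O' -> P),
        proper_gset O' -> fin_orbits O' -> surj_pmap d ->
        undistorted i d).
Proof.
split=> [O d O_proper fo d_surj | O i r _ fo summand O' d _ fo' d_surj].
- have [j [j_hom jK]] := projective_section O_proper P_proj d_surj.
  exact: filling_norm_of_section fo d_surj.1 j_hom jK.
- exact: summand_undistorted fo summand fo' d_surj.
Qed.
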